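(* Let the genus function $g$ satisfy $g(n)\to\infty$ and $g(n)/n\to0$ as $n\to\infty$, and suppose there is $n_0$ such that for $n\ge n_0$, $g(n)$ is non-decreasing and $g(n)/n$ is non-increasing. Then $|\mathrm{Hered}(\mathcal F^g)_n| \ge n!\, g^{(1+o(1))g/2}$, where $g=g(n)$.
   Context: Graphs are finite and simple; $\mathcal B_n$ is the set of graphs in a class $\mathcal B$ on vertex set $[n]$. A genus function is $g:\mathbb N\to\mathbb N_0$. $\mathcal F^g$ is the class of graphs $G$ such that, if $G$ has $n$ vertices, every cellular embedding of $G$ has Euler genus at most $g(n)$; equivalently the cycle rank $e(G)-v(G)+\kappa(G)\le g(n)$, $\kappa(G)$ the number of components. $\mathrm{Hered}(\mathcal B)$ is the class of graphs $G$ with $G[W]\in\mathcal B$ for every nonempty $W\subseteq V(G)$. Asymptotics as $n\to\infty$. *)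

From HB Require Import structures.
From mathcomp Require Import all_boot all_order all_algebra.
From mathcomp Require Import all_classical all_reals all_analysis.
Set Implicit Arguments. Unset Strict Implicit. Unset Printing Implicit Defensive.
Import Order.TTheory GRing.Theory Num.Theory.

Definition simple_graph (n : nat) (E : {set {set 'I_n}}) : bool :=
  [forall e in E, #|e| == 2].

Definition ind_adj (n : nat) (E : {set {set 'I_n}}) (W : {set 'I_n}) : rel 'I_n :=
  fun x y => [&& x \in W, y \in W & [set x; y] \in E].

Definition ind_edges (n : nat) (E : {set {set 'I_n}}) (W : {set 'I_n}) : nat :=
  #|[set e in E | e \subset W]|.

Definition ind_comps (n : nat) (E : {set {set 'I_n}}) (W : {set 'I_n}) : nat :=
  n_comp (ind_adj E W) (mem W).

(* G[W] belongs to F^g: its cycle rank e - v + kappa is at most g(v),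
   where v = |W|. Written additively to avoid truncated subtraction. *)
Definition in_Fg (g : nat -> nat) (n : nat) (E : {set {set 'I_n}})
    (W : {set 'I_n}) : bool :=
  ind_edges E W + ind_comps E W <= g #|W| + #|W|.

Definition in_Hered_Fg (g : nat -> nat) (n : nat) (E : {set {set 'I_n}}) : bool :=
  [forall W : {set 'I_n}, (0 < #|W|) ==> in_Fg g E W].

Definition hered_Fg_count (g : nat -> nat) (n : nat) : nat :=
  #|[set E : {set {set 'I_n}} | simple_graph E && in_Hered_Fg g E]|.

(* The graphs are a Hamiltonian path 0 - 1 - ... - m carrying q chords that join
   the anchors (i+1)l and (q + pi i + 1)l, for a permutation pi of [q], with the
   vertices relabelled by a permutation s.  A chord endpoint has degree 3 while
   the next vertex along the path has degree at most 2, so the path can be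
   followed from either end: the graph determines s up to reversal, and then pi,
   which gives at least n! q! / 2 graphs.
   In an induced subgraph G[W], call runs the maximal blocks of consecutive path
   vertices lying in W.  G[W] has at most (|W| - #runs) + #chords edges, counting
   only chords inside W.  A chord whose upper end lies in a run of length < l
   joins that run to an earlier vertex and so removes a component; every other
   chord owns a window of l vertices of W below its upper end, and these windows
   are disjoint.  Hence the cycle rank of G[W] is at most |W|/l, which is at most
   g(|W|) when g(w)/w is non-increasing and l > n/g(n).
   Taking l = n/g(n) + 1 and q ~ g(n)/2, the bound q! >= (q/e)^q turns
   n! q! / 2 into n! g^((1+o(1)) g/2). *)

From HB Require Import structures.
From mathcomp Require Import all_boot all_order all_algebra.
From mathcomp Require Import all_classical all_reals all_analysis.
From mathcomp Require Import perm zify ring lra.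
Import Order.TTheory GRing.Theory Num.Theory.
Import numFieldNormedType.Exports.

Set Implicit Arguments. Unset Strict Implicit. Unset Printing Implicit Defensive.

Lemma eq_set2 (T : finType) (x y u v : T) :
  [set x; y] = [set u; v] -> (x = u /\ y = v) \/ (x = v /\ y = u).
Proof.
move=> E.
have hx : x \in [set u; v] by rewrite -E set21.
have hy : y \in [set u; v] by rewrite -E set22.
have hu : u \in [set x; y] by rewrite E set21.
have hv : v \in [set x; y] by rewrite E set22.
by move: hx hy hu hv => /set2P[]-> /set2P[]-> /set2P[]? /set2P[]?; subst; auto.
Qed.

Section ChordGraph.
Variables (m l q : nat).
Local Notation N := m.+1.
Hypothesis l_ge2 : 2 <= l.
Hypothesis chords_fit : 2 * q * l + 2 <= N.
Implicit Types (s t : {perm 'I_N}) (pi rho : {perm 'I_q}).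

Definition anchor (j : nat) : nat := j.+1 * l.

Definition chord (pi : {perm 'I_q}) (a b : nat) : bool :=
  [exists i : 'I_q, (a == anchor i) && (b == anchor (q + pi i))].

Definition base_edge (pi : {perm 'I_q}) (a b : nat) : bool :=
  (b == a.+1) || chord pi a b.

Definition chord_graph (s : {perm 'I_N}) (pi : {perm 'I_q}) : {set {set 'I_N}} :=
  [set [set s x.1; s x.2] | x in [set x : 'I_N * 'I_N | base_edge pi x.1 x.2]].

Lemma anchor_lt j : j < 2 * q -> anchor j < m.
Proof.
rewrite /anchor => hj.
have : j.+1 * l <= 2 * q * l by rewrite leq_mul2r hj orbT.
lia.
Qed.

Lemma anchor_ge j : l <= anchor j.
Proof. by rewrite /anchor mulSn leq_addr. Qed.

Lemma anchor_inj : injective anchor.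
Proof. by move=> a b /eqP; rewrite eqn_mul2r eqSS; case: l l_ge2 => // l' _ /eqP. Qed.

Lemma anchor_gap a b : a < b -> anchor a + l <= anchor b.
Proof.
rewrite /anchor => ab.
have : a.+2 * l <= b.+1 * l by rewrite leq_mul2r ltnS ab orbT.
by rewrite mulSn; lia.
Qed.

Lemma anchor_neq_succ a b : anchor b != (anchor a).+1.
Proof.
apply/eqP => E.
have : anchor b %% l = 0 by rewrite modnMl.
by rewrite E -addn1 modnMDl modn_small; lia.
Qed.

Lemma chord_anchorl pi a b : chord pi a b -> exists2 k, k < 2 * q & a = anchor k.
Proof. by case/existsP => i /andP[/eqP -> _]; exists i => //; have := ltn_ord i; lia. Qed.

Lemma chord_anchorr pi a b : chord pi a b -> exists2 k, k < 2 * q & b = anchor k.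
Proof.
case/existsP => i /andP[_ /eqP ->]; exists (q + pi i) => //.
by have := ltn_ord (pi i); lia.
Qed.

Lemma base_edge_lt pi a b : base_edge pi a b -> a < b.
Proof.
case/orP => [/eqP -> //|/existsP[i /andP[/eqP -> /eqP ->]]].
have : anchor i + l <= anchor (q + pi i) by apply: anchor_gap; have := ltn_ord i; lia.
lia.
Qed.

Lemma chord_graphP s pi e : e \in chord_graph s pi ->
  exists a b : 'I_N, base_edge pi a b /\ e = [set s a; s b].
Proof. by case/imsetP => [[a b]]; rewrite inE /= => ab ->; exists a, b. Qed.

Lemma mem_chord_graph s pi (a b : 'I_N) :
  base_edge pi a b -> [set s a; s b] \in chord_graph s pi.
Proof. by move=> ab; apply/imsetP; exists (a, b); rewrite // inE. Qed.

Lemma chord_graph_simple s pi : simple_graph (chord_graph s pi).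
Proof.
apply/forall_inP => e /chord_graphP[a [b [ab ->]]].
by rewrite cards2 (inj_eq perm_inj) neq_ltn (base_edge_lt ab).
Qed.

Lemma path_edge_mem s pi c : c.+1 < N ->
  [set s (inord c); s (inord c.+1)] \in chord_graph s pi.
Proof. by move=> cN; apply: mem_chord_graph; rewrite /base_edge !inordK ?eqxx //; lia. Qed.

Lemma chord_edge_mem s pi (i : 'I_q) :
  [set s (inord (anchor i)); s (inord (anchor (q + pi i)))] \in chord_graph s pi.
Proof.
have := @anchor_lt i; have := @anchor_lt (q + pi i).
have := ltn_ord i; have := ltn_ord (pi i) => hpi hi h1 h2.
apply: mem_chord_graph; apply/orP; right; apply/existsP; exists i.
by rewrite !inordK ?eqxx //; lia.
Qed.

Lemma nonanchor_nbr t rho (p w : 'I_N) :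
  (forall k, k < 2 * q -> (p : nat) != anchor k) -> [set t p; w] \in chord_graph t rho ->
  exists a : 'I_N, w = t a /\ (a.+1 = p \/ a = p.+1 :> nat).
Proof.
move=> p_off /chord_graphP[a [b [ab E]]].
case: (eq_set2 E) => [[/perm_inj ea ->]|[/perm_inj eb ->]].
- exists b; split => //; move: ab; rewrite /base_edge -ea.
  case/orP => [/eqP|/chord_anchorl[k /p_off]]; [by right|by move/eqP].
- exists a; split => //; move: ab; rewrite /base_edge -eb.
  case/orP => [/eqP|/chord_anchorr[k /p_off]]; [by left|by move/eqP].
Qed.

Lemma nonanchor_nbrs_le2 t rho (p w1 w2 w3 : 'I_N) :
  (forall k, k < 2 * q -> (p : nat) != anchor k) ->
  [set t p; w1] \in chord_graph t rho -> [set t p; w2] \in chord_graph t rho ->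
  [set t p; w3] \in chord_graph t rho -> [&& w1 != w2, w1 != w3 & w2 != w3] -> False.
Proof.
move=> p_off /(nonanchor_nbr p_off)[a1 [-> h1]] /(nonanchor_nbr p_off)[a2 [-> h2]].
move=> /(nonanchor_nbr p_off)[a3 [-> h3]]; rewrite !(inj_eq perm_inj) -!val_eqE /=.
lia.
Qed.

Lemma first_nbr_uniq t rho (w1 w2 : 'I_N) :
  [set t ord0; w1] \in chord_graph t rho -> [set t ord0; w2] \in chord_graph t rho ->
  w1 = w2.
Proof.
have p_off k : k < 2 * q -> (@ord0 m : nat) != anchor k.
  by move=> _; have := anchor_ge k; rewrite /= eq_sym -lt0n; lia.
move=> /(nonanchor_nbr p_off)[a1 [-> h1]] /(nonanchor_nbr p_off)[a2 [-> h2]].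
by congr (t _); apply: val_inj; move: h1 h2 => /=; lia.
Qed.

Lemma interior_nbrs s pi (c : 'I_N) : 0 < c < m ->
  [set s c; s (inord c.-1)] \in chord_graph s pi /\
  [set s c; s (inord c.+1)] \in chord_graph s pi.
Proof.
case/andP=> c_pos c_lt; split.
  rewrite finset.setUC; have := @path_edge_mem s pi c.-1.
  by rewrite prednK // inord_val; apply; lia.
by have := @path_edge_mem s pi c; rewrite inord_val; apply; lia.
Qed.

Lemma chord_graph_ends s t pi rho : chord_graph s pi = chord_graph t rho ->
  t ord0 = s ord0 \/ t ord0 = s ord_max.
Proof.
move=> EE; set c := (s^-1)%g (t ord0); have ec : t ord0 = s c by rewrite permKV.
have [c0|c_pos] := posnP c.
  by left; rewrite ec; congr (s _); apply: val_inj; rewrite /= c0.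
have [c_lt|c_m] : c < m \/ nat_of_ord c = m by have := ltn_ord c; lia.
  2: by right; rewrite ec; congr (s _); apply: val_inj; rewrite /= c_m.
have [lo hi] := @interior_nbrs s pi c (introT andP (conj c_pos c_lt)).
rewrite -ec EE in lo hi.
by have /perm_inj/(congr1 (@nat_of_ord _)) := first_nbr_uniq lo hi; rewrite /= !inordK; lia.
Qed.

Lemma chord_graph_succ_agree s t pi rho (i : nat) :
  chord_graph s pi = chord_graph t rho -> i.+1 < N ->
  (forall j : 'I_N, j <= i -> s j = t j) -> s (inord i.+1) = t (inord i.+1).
Proof.
move=> EE iN agree.
set a : 'I_N := inord i; set j : 'I_N := inord i.+1.
have va : a = i :> nat by rewrite inordK //; lia.
have vj : j = i.+1 :> nat by rewrite inordK.
set c := (s^-1)%g (t j); have ec : t j = s c by rewrite permKV.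
have : [set s a; s c] \in chord_graph s pi.
  by rewrite -ec agree ?va // EE; apply: path_edge_mem.
case/chord_graphP => a' [b' [ab' /eq_set2[][/perm_inj ea /perm_inj ec']]]; last first.
  have ca : c < a by move: (base_edge_lt ab'); rewrite -ea -ec'.
  have /agree : c <= i by lia.
  by rewrite -ec => /perm_inj/(congr1 (@nat_of_ord _)); lia.
rewrite -ea -ec' in ab'; case/orP: ab' => [/eqP ca|/existsP[i0 /andP[/eqP ai /eqP ci]]].
  by rewrite ec (_ : j = c) //; apply: val_inj => /=; lia.
have gap : anchor i0 + l <= anchor (q + pi i0) by apply: anchor_gap; have := ltn_ord i0; lia.
have c_lt : c < m by rewrite ci; apply: anchor_lt; have := ltn_ord (pi i0); lia.
have j_off k : k < 2 * q -> (j : nat) != anchor k by rewrite vj -va ai eq_sym anchor_neq_succ.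
have c_pos : 0 < c by have := anchor_ge (q + pi i0); lia.
have [lo hi] := @interior_nbrs s pi c (introT andP (conj c_pos c_lt)).
have ac : [set s c; s a] \in chord_graph s pi.
  rewrite finset.setUC; apply: mem_chord_graph; apply/orP; right.
  by apply/existsP; exists i0; rewrite ai ci !eqxx.
rewrite -ec EE in lo hi ac.
case: (nonanchor_nbrs_le2 j_off lo hi ac).
by rewrite !(inj_eq perm_inj) -!val_eqE /= !inordK; lia.
Qed.

Lemma chord_graph_perm_eq s t pi rho :
  chord_graph s pi = chord_graph t rho -> s ord0 = t ord0 -> s = t.
Proof.
move=> EE st0.
suff agree i (j : 'I_N) : j <= i -> s j = t j by apply/permP => j; exact: agree.
elim: i j => [|i IH] j.
  by rewrite leqn0 => /eqP j0; rewrite (_ : j = ord0) //; apply: val_inj.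
rewrite leq_eqVlt ltnS => /orP[/eqP ji|]; last exact: IH.
have iN : i.+1 < N by rewrite -ji.
have -> : j = inord i.+1 by apply: val_inj; rewrite /= inordK.
exact: (chord_graph_succ_agree EE iN IH).
Qed.

Lemma chord_graph_chords_eq s pi rho : chord_graph s pi = chord_graph s rho -> pi = rho.
Proof.
move=> EE; apply/permP => i.
have := ltn_ord i; have := ltn_ord (pi i) => hpi hi.
have := @anchor_lt i; have := @anchor_lt (q + pi i) => h2 h1.
have gap : anchor i + l <= anchor (q + pi i) by apply: anchor_gap; lia.
have := chord_edge_mem s pi i; rewrite EE => /chord_graphP[a [b [ab E]]].
case: (eq_set2 E) => -[/perm_inj ea /perm_inj eb]; move: ab; rewrite -ea -eb; last first.
  by move/base_edge_lt; rewrite !inordK; lia.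
rewrite /base_edge !inordK; try lia.
case/orP => [/eqP h|/existsP[k /andP[/eqP /anchor_inj ik /eqP /anchor_inj e]]].
  by move: (anchor_neq_succ i (q + pi i)); rewrite h eqxx.
have ki : k = i by apply: val_inj.
by subst k; apply: val_inj => /=; lia.
Qed.

Lemma card_chord_graphs :
  N`! * q`! <= 2 * #|[set chord_graph x.1 x.2 | x in [set: {perm 'I_N} * {perm 'I_q}]]|.
Proof.
set F := [set chord_graph x.1 x.2 | x in _].
pose rep G := odflt (1%g, 1%g) [pick y | chord_graph y.1 y.2 == G].
have repP x : chord_graph (rep (chord_graph x.1 x.2)).1 (rep (chord_graph x.1 x.2)).2
              = chord_graph x.1 x.2.
  by rewrite /rep; case: pickP => [y /eqP -> //|/(_ x)]; rewrite eqxx.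
(* On a fibre of chord_graph, s determines pi and is determined by s ord0,
   which takes one of two values. *)
pose h x := (chord_graph x.1 x.2, x.1 ord0 == (rep (chord_graph x.1 x.2)).1 ord0).
have h_inj : injective h.
  move=> [s1 p1] [s2 p2]; rewrite /h /= => [[E12 b12]].
  have s12 : s1 = s2.
    apply: (chord_graph_perm_eq E12).
    set r := rep (chord_graph s1 p1) in b12 *.
    have R1 : chord_graph r.1 r.2 = chord_graph s1 p1 by exact: (repP (s1, p1)).
    have R2 : chord_graph r.1 r.2 = chord_graph s2 p2 by rewrite R1.
    move: b12; rewrite -E12 -/r.
    by case: (chord_graph_ends R1) => ->; case: (chord_graph_ends R2) => ->;
       rewrite ?eqxx //; case: eqP.
  by subst s2; rewrite (chord_graph_chords_eq E12).
have : #|h @: [set: {perm 'I_N} * {perm 'I_q}]| <= #|finset.setX F [set: bool]|.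
  apply: subset_leq_card; apply/fintype.subsetP => y /imsetP[x _ ->].
  by rewrite inE /= inE; apply/andP; split; [apply/imsetP; exists x|].
by rewrite card_imset // cardsT card_prod !card_Sn cardsX cardsT card_bool [#|F| * 2]mulnC.
Qed.

Section Hereditary.
Variable g : nat -> nat.
Hypothesis g_ge_div : forall w, w <= N -> w %/ l <= g w.
Variables (s : {perm 'I_N}) (pi : {perm 'I_q}) (W : {set 'I_N}).

Let E := chord_graph s pi.
Let e := ind_adj E W.

Definition kept (p : nat) : bool := (p < N) && (s (inord p) \in W).

(* For a kept position p, the first position of the maximal block of
   consecutive kept positions ending at p. *)
Fixpoint run_start (p : nat) : nat :=
  if p is p'.+1 then (if kept p' then run_start p' else p) else 0.

Definition top (i : 'I_q) : nat := anchor (q + pi i).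

Definition kept_pos := [set p : 'I_N | s p \in W].
Definition pred_kept := [set p : 'I_N | (0 < p) && kept p.-1].
Definition kept_chords := [set i : 'I_q | kept (anchor i) && kept (top i)].
Definition window_kept := [set i : 'I_q | [forall t : 'I_l.+1, kept (top i - t)]].
Definition short_chords := kept_chords :\: window_kept.
Definition long_chords := kept_chords :&: window_kept.
Definition merged_starts := [set (inord (run_start (top i)) : 'I_N) | i in short_chords].
Definition free_starts := (kept_pos :\: pred_kept) :\: merged_starts.

Lemma run_start_le p : run_start p <= p.
Proof. by elim: p => //= p IH; case: ifP => // _; exact: leqW. Qed.

Lemma kept_run p k : kept p -> run_start p <= k <= p -> kept k.
Proof.
elim: p k => [|p IH] k /=; first by move=> kp; rewrite leqn0 => /eqP ->.
case: ifP => kp kp1 /andP[h1 h2]; last by have -> : k = p.+1 by apply/eqP; rewrite eqn_leq h1 h2.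
case: (ltngtP k p.+1) => [hk||->] //; last by rewrite ltnNge h2.
by apply: IH => //; rewrite h1 -ltnS.
Qed.

Lemma run_start_first p : (run_start p == 0) || ~~ kept (run_start p).-1.
Proof. by elim: p => //= p IH; case: ifP => // ->; rewrite orbT. Qed.

Lemma run_start_gt p d : kept p -> d <= p -> ~~ kept (p - d) -> p < run_start p + d.
Proof.
move=> kp dp; apply: contraNT; rewrite -leqNgt => h.
by apply: (kept_run kp); rewrite leq_subr andbT leq_subRL // addnC.
Qed.

Lemma kept_ord (p : 'I_N) : kept p = (s p \in W).
Proof. by rewrite /kept ltn_ord inord_val. Qed.

Lemma card_kept_pos : #|kept_pos| = #|W|.
Proof.
rewrite -[RHS](card_preimset W (@perm_inj _ s)).
by apply: eq_card => x; rewrite !inE.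
Qed.

Lemma top_lt i : top i < m.
Proof. by apply: anchor_lt; have := ltn_ord (pi i); lia. Qed.

Lemma anchor_ord_lt (i : 'I_q) : anchor i < m.
Proof. by apply: anchor_lt; have := ltn_ord i; lia. Qed.

Lemma top_gap (i : 'I_q) : anchor i + l <= top i.
Proof. by apply: anchor_gap; have := ltn_ord i; lia. Qed.

Lemma ind_adj_sym : symmetric e.
Proof. by move=> x y; rewrite /e /ind_adj finset.setUC andbCA. Qed.

Lemma ind_adj_closed : fingraph.closed e (mem W).
Proof. by move=> x y /and3P[xW yW _]; move: xW yW; rewrite /in_mem /= => -> ->. Qed.

Lemma ind_adj_succ p : kept p -> kept p.+1 -> e (s (inord p)) (s (inord p.+1)).
Proof.
move=> /andP[_ h1] /andP[h2 h3]; rewrite /e /ind_adj h1 h3 /=.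
exact: path_edge_mem.
Qed.

Lemma connect_run_start p : kept p -> connect e (s (inord (run_start p))) (s (inord p)).
Proof.
elim: p => [|p IH] /=; first by rewrite connect0.
case: ifP => // kp kp1.
by apply: connect_trans (IH kp) (connect1 _); exact: ind_adj_succ.
Qed.

Lemma ind_edges_le : ind_edges E W <= #|kept_pos :&: pred_kept| + #|kept_chords|.
Proof.
rewrite /ind_edges.
apply: (@leq_trans #|[set [set s (inord p.-1); s p] | p : 'I_N in kept_pos :&: pred_kept] :|:
     [set [set s (inord (anchor i)); s (inord (top i))] | i : 'I_q in kept_chords]|).
  apply: subset_leq_card; apply/fintype.subsetP => x.
  rewrite inE => /andP[/chord_graphP[a [b [ab ->]]] sub].
  have aW : s a \in W by apply: (fintype.subsetP sub); rewrite set21.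
  have bW : s b \in W by apply: (fintype.subsetP sub); rewrite set22.
  case/orP: ab => [/eqP ba|/existsP[i /andP[/eqP ai /eqP bi]]].
    apply/setUP; left; apply/imsetP; exists b.
      by rewrite !inE bW ba /= kept_ord.
    by have -> : inord b.-1 = a :> 'I_N by apply: val_inj; rewrite /= ba /= inordK.
  have -> : a = inord (anchor i) :> 'I_N by rewrite -ai inord_val.
  have -> : b = inord (top i) :> 'I_N.
    by apply: val_inj; rewrite /= bi inordK //; exact: ltnW (top_lt i).
  have ka : kept (anchor i) by rewrite -ai kept_ord.
  have kt : kept (top i) by rewrite (_ : top i = b) ?kept_ord // bi.
  by apply/setUP; right; apply/imsetP; exists i; rewrite // inE ka kt.
apply: leq_trans (leq_card_setU _ _) _; apply: leq_add; exact: leq_imset_card.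
Qed.

Lemma short_chord_facts i : i \in short_chords ->
  [/\ kept (anchor i), kept (top i) & top i < run_start (top i) + l].
Proof.
rewrite !inE => /andP[/forallPn[t kt] /andP[ka kb]]; split => //.
have tl : t <= top i by have := ltn_ord t; have := anchor_ge (q + pi i); rewrite /top; lia.
by have := run_start_gt kb tl kt; have := ltn_ord t; lia.
Qed.

Lemma free_start_of_min (z : 'I_N) : z \in W ->
  (forall y, connect e z y -> (s^-1)%g z <= (s^-1)%g y) -> (s^-1)%g z \in free_starts.
Proof.
move=> zW zmin; set p := (s^-1)%g z; have sp : s p = z by rewrite permKV.
rewrite !inE sp zW andbT; apply/andP; split.
  apply/imsetP => -[i /short_chord_facts[ka kt short] pE].
  have zt : connect e z (s (inord (top i))) by rewrite -sp pE; exact: connect_run_start.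
  have aN : anchor i < N by have := anchor_ord_lt i; lia.
  have tN : top i < N by have := top_lt i; lia.
  have ta : e (s (inord (top i))) (s (inord (anchor i))).
    by rewrite /e /ind_adj -!kept_ord !inordK // kt ka finset.setUC chord_edge_mem.
  have := zmin _ (connect_trans zt (connect1 ta)); rewrite -/p permK pE !inordK //.
    by have := top_gap i; lia.
  by have := run_start_le (top i); lia.
apply/negP => /andP[p_pos kp].
have zp : e z (s (inord p.-1)).
  rewrite /e /ind_adj zW; move: kp => /andP[_ ->] /=.
  rewrite -sp finset.setUC; have {2}-> : p = inord p.-1.+1 :> 'I_N.
    by apply: val_inj; rewrite /= inordK; have := ltn_ord p; lia.
  by apply: path_edge_mem; have := ltn_ord p; lia.
by have := zmin _ (connect1 zp); rewrite -/p permK inordK; have := ltn_ord p; lia.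
Qed.

Lemma free_starts_cover x : x \in W -> exists2 p, p \in free_starts & connect e x (s p).
Proof.
move=> xW.
have [z xz zmin] := arg_minnP (fun z => nat_of_ord ((s^-1)%g z)) (connect0 e x).
have zW : z \in W by rewrite -(closed_connect ind_adj_closed xz).
exists ((s^-1)%g z); last by rewrite permKV.
by apply: free_start_of_min => // y zy; apply: zmin; exact: connect_trans xz zy.
Qed.

Lemma ind_comps_le : ind_comps E W <= #|free_starts|.
Proof.
rewrite /ind_comps /n_comp_mem.
apply: leq_trans (leq_imset_card (fun p => fingraph.root e (s p)) free_starts).
apply: subset_leq_card; apply/fintype.subsetP => r; rewrite !inE => /andP[rr rW].
have [p pf rp] := free_starts_cover rW; apply/imsetP; exists p => //.
by rewrite -(fingraph.rootP (sym_connect_sym ind_adj_sym) rp); apply/esym/eqP.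
Qed.

Lemma merged_starts_sub : merged_starts \subset kept_pos :\: pred_kept.
Proof.
apply/fintype.subsetP => p /imsetP[i /short_chord_facts[_ kt _] ->].
have rN : run_start (top i) < N by have := top_lt i; have := run_start_le (top i); lia.
rewrite !inE -kept_ord inordK // (@kept_run _ (run_start (top i)) kt) ?leqnn ?run_start_le //.
rewrite andbT.
by case/orP: (run_start_first (top i)) => [/eqP -> //|/negbTE ->]; rewrite andbF.
Qed.

Lemma top_window_inj (i j : 'I_q) (d d' : nat) : d < l -> d' < l ->
  top i - d = top j - d' -> i = j /\ d = d'.
Proof.
move=> dl dl' same.
have gi := anchor_ge (q + pi i); have gj := anchor_ge (q + pi j).
have eij : q + pi i = q + pi j.
  case: (ltngtP (q + pi i) (q + pi j)) => // h; have := anchor_gap h;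
    rewrite /top in same; lia.
have ij : i = j by apply: (@perm_inj _ pi); apply: val_inj => /=; lia.
by subst j; split => //; rewrite /top in same; lia.
Qed.

Lemma card_merged_starts : #|merged_starts| = #|short_chords|.
Proof.
apply: card_in_imset => i j /short_chord_facts[_ _ hi] /short_chord_facts[_ _ hj].
have := run_start_le (top i); have := run_start_le (top j).
have := top_lt i; have := top_lt j => tj ti ri rj.
move/(congr1 (@nat_of_ord _)); rewrite !inordK; try lia.
move=> same; have [] // := @top_window_inj i j (top i - run_start (top i))
  (top j - run_start (top j)); lia.
Qed.

Lemma long_chords_window : #|long_chords| * l <= #|W|.
Proof.
pose f (x : 'I_q * 'I_l) := s (inord (top x.1 - x.2)).
have : #|f @: finset.setX long_chords [set: 'I_l]| <= #|W|.
  apply: subset_leq_card; apply/fintype.subsetP => z /imsetP[[i d]].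
  rewrite !inE /= andbT => /andP[_ /forallP win] ->.
  by have /andP[_ ->] := win (widen_ord (leqnSn l) d).
rewrite card_in_imset ?cardsX ?cardsT ?card_ord //.
move=> [i d] [j d'] _ _; rewrite /f /= => /perm_inj/(congr1 (@nat_of_ord _)).
have := top_lt i; have := top_lt j; have := ltn_ord d; have := ltn_ord d' => hd' hd tj ti.
rewrite !inordK; try lia.
by case/top_window_inj => // -> /val_inj ->.
Qed.

Lemma in_Fg_chord_graph : in_Fg g E W.
Proof.
rewrite /in_Fg.
have edges := ind_edges_le; have comps := ind_comps_le.
have starts : #|free_starts| + #|short_chords| <= #|kept_pos :\: pred_kept|.
  rewrite /free_starts -(cardsID merged_starts (kept_pos :\: pred_kept)).
  by rewrite (finset.setIidPr merged_starts_sub) card_merged_starts addnC.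
have runs := cardsID pred_kept kept_pos.
have chords : #|kept_chords| = #|long_chords| + #|short_chords| by rewrite cardsID.
have long : #|long_chords| <= g #|W|.
  apply: leq_trans (g_ge_div _); first by rewrite leq_divRL ?long_chords_window //; lia.
  by rewrite -card_kept_pos (leq_trans (max_card _)) ?card_ord.
have := card_kept_pos; lia.
Qed.

End Hereditary.

Lemma chord_graph_hered g s pi :
  (forall w, w <= N -> w %/ l <= g w) -> in_Hered_Fg g (chord_graph s pi).
Proof. by move=> g_ge; apply/forallP => W; apply/implyP => _; exact: in_Fg_chord_graph. Qed.

End ChordGraph.

Lemma hered_Fg_count_ge (g : nat -> nat) (n l q : nat) :
  2 <= l -> 2 * q * l + 2 <= n -> (forall w, w <= n -> w %/ l <= g w) ->
  n`! * q`! <= 2 * hered_Fg_count g n.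
Proof.
case: n => [|m] l_ge2 fit g_ge; first by lia.
apply: leq_trans (card_chord_graphs l_ge2 fit) _; rewrite leq_mul2l /=.
apply: subset_leq_card; apply/fintype.subsetP => G /imsetP[x _ ->].
by rewrite inE chord_graph_simple ?chord_graph_hered.
Qed.

Definition spacing (n G : nat) : nat := (n %/ G).+1.
Definition chord_pairs (n G : nat) : nat := (n - 2) %/ (2 * spacing n G).

Lemma chord_pairs_fit n G : 2 <= n -> 2 * chord_pairs n G * spacing n G + 2 <= n.
Proof.
move=> n_ge2; have := leq_divM (n - 2) (2 * spacing n G).
rewrite -/(chord_pairs n G); lia.
Qed.

Lemma spacing_gt n G : 0 < G -> n < spacing n G * G.
Proof. exact: ltn_ceil. Qed.

Lemma double_chord_pairs_lt n G : 0 < G -> 2 * chord_pairs n G < G.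
Proof.
move=> G_pos; rewrite -(ltn_pmul2r (ltn0Sn (n %/ G))) -/(spacing n G).
have := leq_divM (n - 2) (2 * spacing n G); have := spacing_gt n G_pos.
rewrite -/(chord_pairs n G); lia.
Qed.

Lemma double_chord_pairs_ge n G : 2 <= n -> 0 < G ->
  G * n <= 2 * chord_pairs n G * n + G * G + 3 * G + 2 * n.
Proof.
move=> n_ge2 G_pos; set Q := chord_pairs n G; set L := spacing n G.
have Q_up : n - 2 < Q.+1 * (2 * L) by apply: ltn_ceil; rewrite muln_gt0.
have L_up : L * G <= n + G by rewrite /L /spacing mulSn addnC leq_add2r leq_divM.
have QG : 2 * Q * G <= G * G by rewrite leq_mul2r ltnW ?double_chord_pairs_lt ?orbT.
have : G * (n - 1) <= 2 * Q.+1 * (n + G).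
  apply: (@leq_trans (2 * Q.+1 * (L * G))); last by rewrite leq_mul2l L_up orbT.
  by rewrite (_ : 2 * Q.+1 * (L * G) = G * (Q.+1 * (2 * L))); [rewrite leq_mul2l; lia | ring].
nia.
Qed.

Lemma div_le_of_ratio_mono (g : nat -> nat) (n0 n L : nat) :
  (forall w, n0 <= w <= n -> 0 < w -> g n * w <= g w * n) ->
  n <= L * g n -> n0 <= L -> 0 < L -> forall w, w <= n -> w %/ L <= g w.
Proof.
move=> mono nLg n0L L_pos w wn; set c := w %/ L.
have [->//|c_pos] := posnP c.
have cLw : c * L <= w := leq_divM w L.
have Lw : L <= w by apply: leq_trans cLw; rewrite leq_pmull.
have := mono w; rewrite (leq_trans n0L Lw) wn => /(_ isT (leq_trans L_pos Lw)) gw.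
have : c * n <= g w * n.
  have h1 : c * n <= c * L * g n by rewrite -mulnA leq_mul2l nLg orbT.
  have h2 : c * L * g n <= g n * w by rewrite mulnC leq_mul2l cLw orbT.
  exact: leq_trans h1 (leq_trans h2 gw).
by rewrite leq_mul2r; case/orP => // /eqP n_eq0; move: Lw wn; rewrite n_eq0; lia.
Qed.

Local Open Scope classical_set_scope.
Local Open Scope ring_scope.

Section Asymptotics.
Variable R : realType.

Definition exponent_error (G Q : R) : R := 2 * (Q * ln Q - Q - ln 2) / (G * ln G) - 1.

Lemma powR_exponent_error (G Q : R) : 1 < G ->
  G `^ ((1 + exponent_error G Q) * G / 2) = expR (Q * ln Q - Q - ln 2).
Proof.
move=> G_gt1; have G_pos : 0 < G by apply: lt_trans G_gt1.
have lnG_pos : 0 < ln G by apply: ln_gt0.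
rewrite /powR gt_eqF // /exponent_error; congr expR.
by field; rewrite !gt_eqF.
Qed.

Lemma cvgy_ln {T} {F : set_system T} {FF : Filter F} (f : T -> R) :
  f @ F --> +oo -> ln (f x) @[x --> F] --> +oo.
Proof.
move/cvgryPge => f_oo; apply/cvgryPge => A; near=> x.
have Af : expR A <= f x by near: x; exact: f_oo.
by rewrite -[A]expRK ler_ln ?posrE ?expR_gt0 // (lt_le_trans (expR_gt0 A)).
Unshelve. all: end_near.
Qed.

Lemma exponent_errorE (G Q : R) : 1 < G -> 0 < Q ->
  exponent_error G Q = 2 * Q / G * (1 + ln (2 * Q / G / 2) / ln G)
    - 2 * Q / G / ln G - 2 * ln 2 * (G^-1 / ln G) - 1.
Proof.
move=> G_gt1 Q_pos; have G_pos : 0 < G by apply: lt_trans G_gt1.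
have lnG_pos : 0 < ln G by apply: ln_gt0.
have -> : ln (2 * Q / G / 2) = ln Q - ln G.
  by rewrite -ln_div ?posrE //; congr ln; field; rewrite gt_eqF.
by rewrite /exponent_error; field; rewrite !gt_eqF.
Qed.

Lemma exponent_error_cvg0 {T} {F : set_system T} {FF : Filter F} (G Q : T -> R) :
  G @ F --> +oo -> (2 * Q x / G x) @[x --> F] --> (1 : R) ->
  exponent_error (G x) (Q x) @[x --> F] --> (0 : R).
Proof.
move=> G_oo ratio.
have G_gt1 : \forall x \near F, 1 < G x by move/cvgryPgt: G_oo; apply.
have lnG_oo : ln (G x) @[x --> F] --> +oo := cvgy_ln G_oo.
have inv_G : (G x)^-1 @[x --> F] --> 0.
  apply/gtr0_cvgV0; last exact: G_oo.
  by near=> x; apply: lt_trans ltr01 _; near: x.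
have inv_lnG : (ln (G x))^-1 @[x --> F] --> 0.
  apply/gtr0_cvgV0; last exact: lnG_oo.
  by near=> x; apply: ln_gt0; near: x.
have ln_half : ln (2 * Q x / G x / 2) @[x --> F] --> ln (1 / 2).
  exact: continuous_cvg (continuous_ln _) (cvgM ratio (cvg_cst _)).
apply: cvg_trans (near_eq_cvg _) _; last first.
  have -> : (0 : R) = 1 * (1 + ln (1 / 2) * 0) - 1 * 0 - 2 * ln 2 * (0 * 0) - 1.
    by rewrite !mulr0 addr0 !subr0 mulr1 subrr.
  apply: cvgB; last exact: cvg_cst.
  apply: cvgB; first apply: cvgB.
  - exact: cvgM ratio (cvgD (cvg_cst _) (cvgM ln_half inv_lnG)).
  - exact: cvgM ratio inv_lnG.
  - exact: cvgM (cvg_cst _) (cvgM inv_G inv_lnG).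
near=> x.
have G1 : 1 < G x by near: x.
have Q_pos : 0 < Q x.
  have : 0 < 2 * Q x / G x by near: x; apply: (cvgr_gt 1).
  by rewrite pmulr_lgt0 ?invr_gt0 ?(lt_trans ltr01 G1) // pmulr_rgt0.
by rewrite !fctE exponent_errorE.
Unshelve. all: end_near.
Qed.


Lemma fact_ge_expR (k : nat) : expR (k%:R * ln k%:R - k%:R) <= k`!%:R :> R.
Proof.
case: k => [|k]; first by rewrite mul0r subr0 expR0.
have k_pos : (0 : R) < k.+1%:R by rewrite ltr0n.
rewrite expRB (mulrC _ (ln _)) expRM_natr lnK ?posrE // ler_pdivrMr ?expR_gt0 //.
have fact_pos : (0 : R) < k.+1`!%:R by rewrite ltr0n fact_gt0.
have : k.+1%:R ^+ k.+1 / k.+1`!%:R <= expR k.+1%:R :> R.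
  by apply: le_trans _ (@expR_ge1Dxn R k.+1%:R k (ler0n _ _)); rewrite lerDr.
by rewrite ler_pdivrMr // mulrC.
Qed.

Lemma fact_mul_expR_le (n k c : nat) : (n`! * k`! <= 2 * c)%N ->
  n`!%:R * expR (k%:R * ln k%:R - k%:R - ln 2) <= c%:R :> R.
Proof.
move=> count; rewrite expRB lnK ?posrE // mulrA ler_pdivrMr //.
apply: le_trans (ler_wpM2l (ler0n _ _) (fact_ge_expR k)) _.
by rewrite [_ * 2]mulrC; move: count; rewrite -(ler_nat R) !natrM.
Qed.

Lemma ler_ratio_nat (a b c d : nat) : (0 < b)%N -> (0 < d)%N ->
  a%:R / b%:R <= c%:R / d%:R :> R -> (a * d <= c * b)%N.
Proof.
move=> b_pos d_pos; rewrite ler_pdivrMr ?ltr0n // mulrAC ler_pdivlMr ?ltr0n //.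
by rewrite -!natrM ler_nat.
Qed.

Lemma double_chord_pairs_ratio_bounds (n G : nat) : (2 <= n)%N -> (0 < G)%N ->
  (1 - (G%:R / n%:R + 3 / n%:R + 2 / G%:R) <= 2 * (chord_pairs n G)%:R / G%:R :> R) &&
  (2 * (chord_pairs n G)%:R / G%:R <= 1 :> R).
Proof.
move=> n_ge2 G_pos; set Q := chord_pairs n G.
have Gr : (0 : R) < G%:R by rewrite ltr0n.
have nr : (0 : R) < n%:R by rewrite ltr0n; lia.
apply/andP; split; last first.
  by rewrite ler_pdivrMr // mul1r -natrM ler_nat ltnW ?double_chord_pairs_lt.
have := double_chord_pairs_ge n_ge2 G_pos; rewrite -(ler_nat R) !natrD !natrM -/Q => h.
rewrite -subr_ge0 (_ : _ - _ = (2 * Q%:R * n%:R + G%:R * G%:R + 3 * G%:R + 2 * n%:R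
                                 - G%:R * n%:R) / (G%:R * n%:R)).
  by apply: divr_ge0; [rewrite subr_ge0; lra | apply: mulr_ge0; apply: ltW].
by field; rewrite !gt_eqF.
Qed.

Lemma double_chord_pairs_ratio_cvg1 (g : nat -> nat) :
  g @ \oo --> \oo -> ((g n)%:R / n%:R : R) @[n --> \oo] --> (0 : R) ->
  (2 * (chord_pairs n (g n))%:R / (g n)%:R : R) @[n --> \oo] --> (1 : R).
Proof.
move=> g_oo g_sublin.
have g_pos : \forall n \near \oo, (0 < g n)%N by move/cvgnyPge: g_oo; apply.
have inv_n : (n%:R^-1 : R) @[n --> \oo] --> 0.
  apply/gtr0_cvgV0; last exact: cvgr_idn.
  by near=> n; rewrite ltr0n; near: n; exact: nbhs_infty_ge.
have inv_g : ((g n)%:R^-1 : R) @[n --> \oo] --> 0.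
  apply/gtr0_cvgV0; last exact/cvgrnyP.
  by near=> n; rewrite ltr0n; near: n.
apply: (squeeze_cvgr _ _ (cvg_cst (1 : R))).
  near=> n; apply: double_chord_pairs_ratio_bounds.
    by near: n; exact: nbhs_infty_ge.
  by near: n.
rewrite [X in _ --> X](_ : _ = 1 - (0 + 3 * 0 + 2 * 0)); last by rewrite !mulr0 !addr0 subr0.
apply: cvgB; first exact: cvg_cst.
apply: cvgD; first apply: cvgD.
- exact: g_sublin.
- exact: cvgM (cvg_cst _) inv_n.
- exact: cvgM (cvg_cst _) inv_g.
Unshelve. all: end_near.
Qed.

Lemma sublinear_mul_le (g : nat -> nat) (K : nat) :
  ((g n)%:R / n%:R : R) @[n --> \oo] --> (0 : R) -> \forall n \near \oo, (g n * K <= n)%N.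
Proof.
move=> g_sublin; near=> n.
have n_pos : (0 < n)%N by near: n; exact: nbhs_infty_ge.
have : (g n)%:R / n%:R < K.+1%:R^-1 :> R.
  by near: n; apply: (cvgr_lt _ g_sublin); rewrite invr_gt0 ltr0n.
rewrite ltr_pdivrMr ?ltr0n // mulrC ltr_pdivlMr ?ltr0n // -natrM ltr_nat.
lia.
Unshelve. all: end_near.
Qed.

End Asymptotics.

Theorem lemma20 (R : realType) (g : nat -> nat) :
  (forall M : nat, exists N : nat, forall n : nat, (N <= n)%N -> (M <= g n)%N) ->
  (((g n)%:R / n%:R : R) @[n --> \oo] --> (0 : R)) ->
  (exists n0 : nat, forall m n : nat, (0 < m)%N -> (n0 <= m)%N -> (m <= n)%N ->
      (g m <= g n)%N /\ (g n)%:R / n%:R <= (g m)%:R / m%:R :> R) ->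
  exists eps : nat -> R, (eps @ \oo --> (0 : R)) /\
    \forall n \near \oo,
      (n`!)%:R * ((g n)%:R `^ ((1 + eps n) * (g n)%:R / 2))
        <= (hered_Fg_count g n)%:R.
Proof.
move=> g_unbdd g_sublin [n0 g_mono].
have g_oo : g @ \oo --> \oo by apply/cvgnyPge => M; have [N gN] := g_unbdd M; exists N.
exists (fun n => exponent_error (g n)%:R (chord_pairs n (g n))%:R); split.
  apply: exponent_error_cvg0; first exact/cvgrnyP.
  exact: double_chord_pairs_ratio_cvg1.
near=> n.
have g_ge2 : (2 <= g n)%N by near: n; move/cvgnyPge: g_oo; apply.
have g_small : (g n * maxn 2 n0 <= n)%N by near: n; exact: sublinear_mul_le g_sublin.
have spacing_ge : (maxn 2 n0 < spacing n (g n))%N by rewrite ltnS leq_divRL //; lia.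
rewrite powR_exponent_error ?ltr1n //; apply: fact_mul_expR_le.
apply: (hered_Fg_count_ge (l := spacing n (g n))); [lia | apply: chord_pairs_fit; nia |].
apply: (div_le_of_ratio_mono (n0 := n0)); [|apply/ltnW/spacing_gt; lia|lia|lia].
move=> w /andP[n0w wn] w_pos; apply: (ler_ratio_nat (R := R)) => //; first nia.
by case: (g_mono w n w_pos n0w wn).
Unshelve. all: end_near.
Qed.
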